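(* Let $N\ge1$ and let $\{a_n\}_{n=0}^{N-1},\{b_n\}_{n=0}^{N-1},\{c_n\}_{n=1}^{N}$ be real sequences with $c_n>0$, $a_{N-1}=0$, $b_{N-1}=\tfrac12$, $c_N=1$, satisfying for $n=1,\dots,N-1$ $$a_{n-1}=a_n\Big(\frac{1}{c_n^2+1}\Big)^{1/2}+b_n\Big(\frac{1}{c_n^2+1}\Big)^{3/2}c_n^2,\quad b_{n-1}=b_n\Big(\frac{1}{c_n^2+1}\Big)^{3/2}+\frac{c_n}{c_n^2+1},\quad a_n+b_n=\frac{1-c_n^2}{c_n(1+c_n^2)^{1/2}}.$$ Then for each $n\in\{2,\dots,N\}$, $c_{n-1}$ is the unique root in $(0,1)$ of the equation in $x$ $$(1-x^2)\,c_n(1+c_n^2)=x(1+x^2)^{1/2},$$ and $c_N>c_{N-1}>\cdots>c_2>c_1$.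
   Context: These sequences describe the equilibrium of the risk-neutral insider model (Model 2) of an $N$-period Kyle-type insider trading model, in which the insider's trading intensity in period $n$ is $c_n\sigma_u\Delta t_N^{1/2}\Sigma_{n-1}^{-1/2}$; the claim concerns only the sequences as defined here. *)

From Stdlib Require Export Reals.
Open Scope R_scope.

Definition model2_rel (a b c : nat -> R) (n : nat) : Prop :=
  a (n - 1)%nat = a n * Rpower (/ (c n ^ 2 + 1)) (1/2)
                  + b n * Rpower (/ (c n ^ 2 + 1)) (3/2) * c n ^ 2 /\
  b (n - 1)%nat = b n * Rpower (/ (c n ^ 2 + 1)) (3/2) + c n / (c n ^ 2 + 1) /\
  a n + b n = (1 - c n ^ 2) / (c n * Rpower (1 + c n ^ 2) (1/2)).

Definition root_eq (cn x : R) : Prop :=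
  (1 - x ^ 2) * cn * (1 + cn ^ 2) = x * Rpower (1 + x ^ 2) (1/2).

(** The model relations telescope: summing the two recursions for [a] and [b]
    shows [a_(n-1) + b_(n-1) = 1 / (c_n (1 + c_n^2))], while the third relation
    at index [n-1] gives [a_(n-1) + b_(n-1) = (1 - c_(n-1)^2) / (c_(n-1) (1 + c_(n-1)^2)^(1/2))];
    at [n = N] the boundary values give the same [1/2].  Equating the two is the
    root equation.  Since [x (1 + x^2)^(1/2) / (1 - x^2)] is strictly increasing on
    (0,1), the root is unique and increasing in [c_n (1 + c_n^2)], itself increasing
    in [c_n]; a downward induction from [c_N = 1] orders the sequence. *)

From Stdlib Require Import Reals Lra Lia Psatz.
Open Scope R_scope.

Lemma Rpower_half y : 0 < y -> Rpower y (1/2) = sqrt y.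
Proof. intros y_pos; replace (1/2) with (/2) by field; exact (Rpower_sqrt y y_pos). Qed.

Lemma Rpower_three_halves y : 0 < y -> Rpower y (3/2) = y * sqrt y.
Proof.
  intros y_pos; replace (3/2) with (1 + 1/2) by field.
  now rewrite Rpower_plus, Rpower_1, Rpower_half.
Qed.

Lemma nat_down_ind (P : nat -> Prop) (N : nat) :
  P N -> (forall n, (n < N)%nat -> P (S n) -> P n) -> forall n, (n <= N)%nat -> P n.
Proof.
  intros PN step n n_le; remember (N - n)%nat as k eqn:Ek; revert n n_le Ek.
  induction k as [|k IH]; intros n n_le Ek.
  - now replace n with N by lia.
  - apply step; [lia|]. apply IH; lia.
Qed.

Lemma mul_1_add_sqr_lt x y : 0 <= x < y -> x * (1 + x ^ 2) < y * (1 + y ^ 2).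
Proof. intros [x_ge0 x_lt_y]; assert (x ^ 2 <= y ^ 2) by nra; nra. Qed.

Definition xsqrt (x : R) : R := x * sqrt (1 + x ^ 2).

Lemma xsqrt_pos x : 0 < x -> 0 < xsqrt x.
Proof. intros x_pos; unfold xsqrt; assert (0 < sqrt (1 + x ^ 2)) by (apply sqrt_lt_R0; nra); nra. Qed.

Lemma xsqrt_lt x y : 0 <= x < y -> xsqrt x < xsqrt y.
Proof.
  intros [x_ge0 x_lt_y]; unfold xsqrt.
  assert (sqrt (1 + x ^ 2) < sqrt (1 + y ^ 2)) by (apply sqrt_lt_1; nra).
  assert (0 < sqrt (1 + x ^ 2)) by (apply sqrt_lt_R0; nra).
  nra.
Qed.

Lemma root_eq_xsqrt cn x : root_eq cn x <-> (1 - x ^ 2) * (cn * (1 + cn ^ 2)) = xsqrt x.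
Proof.
  unfold root_eq, xsqrt; rewrite Rpower_half by nra.
  split; intros E; rewrite <- E; ring.
Qed.

Lemma xsqrt_root_lt_1 K x : 0 < K -> 0 < x -> (1 - x ^ 2) * K = xsqrt x -> x < 1.
Proof.
  intros K_pos x_pos E; pose proof (xsqrt_pos x x_pos).
  assert (0 < 1 - x ^ 2).
  { destruct (Rlt_or_le 0 (1 - x ^ 2)) as [|le0]; [assumption|].
    assert ((1 - x ^ 2) * K <= 0) by nra; lra. }
  nra.
Qed.

Lemma xsqrt_root_le K K' x y : 0 < K <= K' -> 0 < x < 1 -> 0 < y < 1 ->
  (1 - x ^ 2) * K = xsqrt x -> (1 - y ^ 2) * K' = xsqrt y -> x <= y.
Proof.
  intros [K_pos K_le] x01 y01 Ex Ey.
  destruct (Rle_lt_dec x y) as [|y_lt_x]; [assumption|exfalso].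
  assert (xsqrt y < xsqrt x) by (apply xsqrt_lt; lra).
  assert ((1 - x ^ 2) * K < (1 - y ^ 2) * K) by (apply Rmult_lt_compat_r; nra).
  assert ((1 - y ^ 2) * K <= (1 - y ^ 2) * K') by (apply Rmult_le_compat_l; nra).
  lra.
Qed.

Lemma xsqrt_root_lt K K' x y : 0 < K < K' -> 0 < x < 1 -> 0 < y < 1 ->
  (1 - x ^ 2) * K = xsqrt x -> (1 - y ^ 2) * K' = xsqrt y -> x < y.
Proof.
  intros K_lt x01 y01 Ex Ey.
  destruct (Rle_lt_or_eq_dec x y) as [|<-]; [|assumption|].
  - apply (xsqrt_root_le K K'); lra || assumption.
  - assert ((1 - x ^ 2) * K < (1 - x ^ 2) * K') by (apply Rmult_lt_compat_l; nra).
    lra.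
Qed.

Lemma xsqrt_root_unique K x y : 0 < K -> 0 < x < 1 -> 0 < y < 1 ->
  (1 - x ^ 2) * K = xsqrt x -> (1 - y ^ 2) * K = xsqrt y -> x = y.
Proof.
  intros K_pos x01 y01 Ex Ey; apply Rle_antisym.
  - now apply (xsqrt_root_le K K).
  - now apply (xsqrt_root_le K K).
Qed.

Lemma model2_rel_sum (a b c : nat -> R) n : 0 < c n -> model2_rel a b c n ->
  a n + b n = (1 - c n ^ 2) / xsqrt (c n) /\
  a (n - 1)%nat + b (n - 1)%nat = 1 / (c n * (1 + c n ^ 2)).
Proof.
  intros c_pos [rel_a [rel_b rel_sum]]; unfold xsqrt.
  set (x := c n) in *.
  assert (sqrt_sq : sqrt (1 + x ^ 2) * sqrt (1 + x ^ 2) = 1 + x ^ 2) by (apply sqrt_sqrt; nra).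
  assert (0 < sqrt (1 + x ^ 2)) by (apply sqrt_lt_R0; nra).
  replace (x ^ 2 + 1) with (1 + x ^ 2) in rel_a, rel_b by ring.
  assert (inv_pos : 0 < / (1 + x ^ 2)) by (apply Rinv_0_lt_compat; nra).
  rewrite Rpower_half, Rpower_three_halves, sqrt_inv in rel_a by exact inv_pos.
  rewrite Rpower_three_halves, sqrt_inv in rel_b by exact inv_pos.
  rewrite Rpower_half in rel_sum by nra.
  split; [exact rel_sum|].
  rewrite rel_a, rel_b.
  (* [a_n + b_n] factors out of the sum of the two recursions. *)
  transitivity ((a n + b n) / sqrt (1 + x ^ 2) + x / (1 + x ^ 2)); [field; nra|].
  rewrite rel_sum.
  field_simplify_eq; [nra | repeat split; nra].
Qed.

Section Model2.

Variables (N : nat) (a b c : nat -> R).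
Hypothesis c_pos : forall n, (1 <= n <= N)%nat -> 0 < c n.
Hypothesis a_last : a (N - 1)%nat = 0.
Hypothesis b_last : b (N - 1)%nat = 1 / 2.
Hypothesis c_last : c N = 1.
Hypothesis rel : forall n, (1 <= n <= N - 1)%nat -> model2_rel a b c n.

Lemma model2_sum_prev n : (2 <= n <= N)%nat ->
  a (n - 1)%nat + b (n - 1)%nat = 1 / (c n * (1 + c n ^ 2)).
Proof.
  intros n_range; destruct (Nat.eq_dec n N) as [->|n_ne].
  - rewrite a_last, b_last, c_last; field.
  - apply (model2_rel_sum a b c n); [apply c_pos | apply rel]; lia.
Qed.

Lemma model2_root n : (2 <= n <= N)%nat ->
  0 < c (n - 1)%nat < 1 /\
  (1 - c (n - 1)%nat ^ 2) * (c n * (1 + c n ^ 2)) = xsqrt (c (n - 1)%nat).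
Proof.
  intros n_range.
  assert (x_pos : 0 < c (n - 1)%nat) by (apply c_pos; lia).
  assert (y_pos : 0 < c n) by (apply c_pos; lia).
  pose proof (model2_sum_prev n n_range) as sum_prev.
  destruct (model2_rel_sum a b c (n - 1)) as [sum_cur _]; [assumption | apply rel; lia|].
  rewrite sum_cur in sum_prev.
  set (x := c (n - 1)%nat) in *; set (y := c n) in *.
  pose proof (xsqrt_pos x x_pos).
  assert (K_pos : 0 < y * (1 + y ^ 2)) by nra.
  assert (E : (1 - x ^ 2) * (y * (1 + y ^ 2)) = xsqrt x).
  { replace ((1 - x ^ 2) * (y * (1 + y ^ 2)))
      with ((1 - x ^ 2) / xsqrt x * (xsqrt x * (y * (1 + y ^ 2)))) by (field; lra).
    rewrite sum_prev; field; split; nra. }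
  split; [split; [assumption|] | exact E].
  exact (xsqrt_root_lt_1 _ x K_pos x_pos E).
Qed.

Lemma model2_c_increasing n : (2 <= n <= N)%nat -> c (n - 1)%nat < c n.
Proof.
  intros n_range.
  apply (nat_down_ind (fun n => (2 <= n)%nat -> c (n - 1)%nat < c n) N); [| |lia|lia].
  - intros N_ge2; rewrite c_last; apply (model2_root N); lia.
  - intros m m_lt IH m_ge2.
    specialize (IH ltac:(lia)); replace (S m - 1)%nat with m in IH by lia.
    destruct (model2_root m ltac:(lia)) as [x01 Ex].
    destruct (model2_root (S m) ltac:(lia)) as [y01 Ey].
    replace (S m - 1)%nat with m in y01, Ey by lia.
    apply (xsqrt_root_lt (c m * (1 + c m ^ 2)) (c (S m) * (1 + c (S m) ^ 2)));
      [split; [nra | apply mul_1_add_sqr_lt; lra] | assumption..].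
Qed.

End Model2.

Theorem proposition4 (N : nat) (a b c : nat -> R) :
  (1 <= N)%nat ->
  (forall n, (1 <= n <= N)%nat -> 0 < c n) ->
  a (N - 1)%nat = 0 ->
  b (N - 1)%nat = 1 / 2 ->
  c N = 1 ->
  (forall n, (1 <= n <= N - 1)%nat -> model2_rel a b c n) ->
  (forall n, (2 <= n <= N)%nat ->
     (0 < c (n - 1)%nat < 1 /\ root_eq (c n) (c (n - 1)%nat) /\
      forall x, 0 < x < 1 -> root_eq (c n) x -> x = c (n - 1)%nat)) /\
  (forall n, (2 <= n <= N)%nat -> c (n - 1)%nat < c n).
Proof.
  intros _ c_pos a_last b_last c_last rel; split.
  - intros n n_range.
    destruct (model2_root N a b c c_pos a_last b_last c_last rel n n_range) as [x01 Ex].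
    assert (0 < c n) by (apply c_pos; lia).
    split; [exact x01|]; split; [now apply root_eq_xsqrt|].
    intros x x01' root_x; apply root_eq_xsqrt in root_x.
    apply (xsqrt_root_unique (c n * (1 + c n ^ 2))); [nra | assumption..].
  - exact (model2_c_increasing N a b c c_pos a_last b_last c_last rel).
Qed.
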